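(* Let $A\in\mathbb{R}_+^{n\times n}$ and let $x\in\mathbb{R}_+^n$ be a Perron eigenvector of $A$ normalized so that $\sum_{i=1}^n x_i=1$. (i) If for all $i,j,k$, $x_k<x_j$ implies $a_{i,k}\le a_{i,j}$, then for every $i$: $\frac{1}{n}\sum_{j=1}^n a_{i,j}\le\sum_{j=1}^n a_{i,j}x_j=\rho(A)x_i$. (ii) If for all $i,j,k$, $x_k<x_j$ implies $a_{i,k}\ge a_{i,j}$, then for every $i$: $\frac{1}{n}\sum_{j=1}^n a_{i,j}\ge\sum_{j=1}^n a_{i,j}x_j=\rho(A)x_i$. (iii) If one of the hypotheses of (i) or (ii) holds, then the following are equivalent: (a) $\frac{1}{n}\sum_{j=1}^n a_{i,j}=\sum_{j=1}^n a_{i,j}x_j=\rho(A)x_i$ for all $i$; (b) either $x_i=\frac1n$ for all $i$, or for each $i$ there is a constant $c_i$ with $a_{i,j}=c_i$ for all $j$.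
   Context: $\mathbb{R}_+^{n\times n}$ and $\mathbb{R}_+^n$ denote nonnegative $n\times n$ matrices and nonnegative vectors. $\rho(A)$ is the spectral radius (Perron root) of $A$; a Perron eigenvector is a nonzero nonnegative vector $x$ with $Ax=\rho(A)x$. *)

(* Scalars: an arbitrary real closed field R (e.g. the reals);
   complex eigenvalues live in R[i] = complex R (mathcomp-real-closed). *)
From HB Require Import structures.
From mathcomp Require Import all_boot all_order all_algebra.
From mathcomp.real_closed Require Import complex.
Set Implicit Arguments. Unset Strict Implicit. Unset Printing Implicit Defensive.
Import Order.TTheory GRing.Theory Num.Theory.
Local Open Scope ring_scope.
Local Open Scope complex_scope.

Definition cmx (R : rcfType) (n : nat) (A : 'M[R]_n) : 'M[R[i]]_n :=
  map_mx (fun a : R => a%:C) A.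

Definition spectral_radius_of (R : rcfType) (n : nat) (A : 'M[R]_n) (r : R) : Prop :=
  (exists2 l : R[i], eigenvalue (cmx A) l & `|l| = r%:C) /\
  (forall l : R[i], eigenvalue (cmx A) l -> `|l| <= r%:C).

Definition perron_eigenvector (R : rcfType) (n : nat) (A : 'M[R]_n) (r : R)
  (x : 'cV[R]_n) : Prop :=
  spectral_radius_of A r /\ x != 0 /\ (forall i, 0 <= x i 0) /\ A *m x = r *: x.

From HB Require Import structures.
From mathcomp Require Import all_boot all_order all_algebra ring.
From mathcomp.real_closed Require Import complex.

Set Implicit Arguments.
Unset Strict Implicit.
Unset Printing Implicit Defensive.
Import Order.TTheory GRing.Theory Num.Theory.
Local Open Scope ring_scope.

(* Each row of [A x = rho x] reads [\sum_j a_ij x_j = rho x_i], and the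
   hypotheses say that the row [a_i] is similarly (resp. oppositely) ordered to
   [x].  Chebyshev's sum inequality, in the form
   [\sum_j \sum_k (a_j - a_k)(x_j - x_k) = 2 (n \sum_j a_j x_j - \sum_j a_j \sum_j x_j)]
   with all summands of one sign, then compares the weighted sum with the mean
   (as [\sum_j x_j = 1]); equality forces [a_j = a_k] whenever [x_j <> x_k], so
   either [x] is constant or every row is. *)

Section ChebyshevIdentity.

Variables (R : comNzRingType) (n : nat) (a x : 'I_n -> R).

Lemma sum_const_ord (c : R) : \sum_(j < n) c = n%:R * c.
Proof. by rewrite sumr_const card_ord mulr_natl. Qed.

Lemma chebyshev_sum_identity :
  \sum_j \sum_k (a j - a k) * (x j - x k) =
  (n%:R * \sum_j a j * x j - (\sum_j a j) * (\sum_j x j)) *+ 2.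
Proof.
have expand j k : (a j - a k) * (x j - x k) =
    a j * x j + a k * x k - (a j * x k + a k * x j) by ring.
have diag : \sum_j \sum_k (a j * x j + a k * x k) = (n%:R * \sum_j a j * x j) *+ 2.
  rewrite (eq_bigr (fun j => n%:R * (a j * x j) + \sum_k a k * x k)); last first.
    by move=> j _; rewrite big_split /= sum_const_ord.
  by rewrite big_split /= -mulr_sumr sum_const_ord mulr2n.
have cross : \sum_j \sum_k (a j * x k + a k * x j) = ((\sum_j a j) * (\sum_j x j)) *+ 2.
  have sum_prod (b y : 'I_n -> R) : \sum_j \sum_k b j * y k = (\sum_j b j) * (\sum_j y j).
    by rewrite mulr_suml; apply: eq_bigr => j _; rewrite mulr_sumr.
  under eq_bigr do rewrite big_split /=.
  by rewrite big_split /= sum_prod exchange_big /= sum_prod mulr2n.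
under eq_bigr do under eq_bigr do rewrite expand.
under eq_bigr do rewrite sumrB.
by rewrite sumrB diag cross -mulrnBl.
Qed.

End ChebyshevIdentity.

Section ChebyshevInequality.

Variables (R : realFieldType) (n : nat).

Definition comonotone (a x : 'I_n -> R) := forall j k, x k < x j -> a k <= a j.

Variables (a x : 'I_n -> R).

Lemma comonotone_prod_ge0 : comonotone a x -> forall j k, 0 <= (a j - a k) * (x j - x k).
Proof.
move=> mono j k; case: (ltgtP (x k) (x j)) => [lt_kj|lt_jk|->].
- by rewrite mulr_ge0 // subr_ge0 ?mono // ltW.
- by rewrite mulr_le0 // subr_le0 ?mono // ltW.
- by rewrite subrr mulr0.
Qed.

Hypothesis mono : comonotone a x.

Lemma chebyshev_sum_ler : (\sum_j a j) * (\sum_j x j) <= n%:R * \sum_j a j * x j.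
Proof.
have : 0 <= \sum_j \sum_k (a j - a k) * (x j - x k).
  by apply: sumr_ge0 => j _; apply: sumr_ge0 => k _; apply: comonotone_prod_ge0.
by rewrite chebyshev_sum_identity pmulrn_lge0 // subr_ge0.
Qed.

Lemma chebyshev_sum_eq :
  (\sum_j a j) * (\sum_j x j) = n%:R * \sum_j a j * x j ->
  forall j k, x j != x k -> a j = a k.
Proof.
move=> eq_sums j k neq_x.
have prod_ge0 := comonotone_prod_ge0 mono.
have sum0 : \sum_j \sum_k (a j - a k) * (x j - x k) = 0.
  by rewrite chebyshev_sum_identity eq_sums subrr mul0rn.
have row0 : \sum_k (a j - a k) * (x j - x k) = 0.
  by move/psumr_eq0P: sum0 => -> // j' _; apply: sumr_ge0.
have /eqP : (a j - a k) * (x j - x k) = 0 by move/psumr_eq0P: row0 => ->.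
by rewrite mulf_eq0 !subr_eq0 (negbTE neq_x) orbF => /eqP.
Qed.

End ChebyshevInequality.

Section ProbabilityWeights.

Variables (R : realFieldType) (n : nat) (x : 'I_n -> R).

Hypothesis sum_x1 : \sum_j x j = 1.

Lemma weights_size_gt0 : (0 < n)%N.
Proof.
by case: n x sum_x1 => [|//] x0; rewrite big_ord0 => /eqP; rewrite eq_sym oner_eq0.
Qed.

Let n_gt0 : 0 < n%:R :> R. Proof. by rewrite ltr0n weights_size_gt0. Qed.

Let n_neq0 : n%:R != 0 :> R. Proof. by rewrite gt_eqF. Qed.

Let weighted_sumN (a : 'I_n -> R) : \sum_j - a j * x j = - \sum_j a j * x j.
Proof. by rewrite -sumrN; apply: eq_bigr => j _; rewrite mulNr. Qed.

Lemma mean_le_weighted_sum (a : 'I_n -> R) :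
  comonotone a x -> n%:R^-1 * \sum_j a j <= \sum_j a j * x j.
Proof.
by move/chebyshev_sum_ler; rewrite sum_x1 mulr1 ler_pdivrMl.
Qed.

Lemma mean_eq_weighted_sum (a : 'I_n -> R) :
  comonotone a x -> n%:R^-1 * \sum_j a j = \sum_j a j * x j ->
  forall j k, x j != x k -> a j = a k.
Proof.
by move=> mono eq_mean; apply: chebyshev_sum_eq; rewrite // sum_x1 mulr1 -eq_mean mulVKf.
Qed.

Lemma weighted_sum_le_mean (a : 'I_n -> R) :
  comonotone (fun j => - a j) x -> \sum_j a j * x j <= n%:R^-1 * \sum_j a j.
Proof.
by move/mean_le_weighted_sum; rewrite sumrN mulrN weighted_sumN lerN2.
Qed.

Lemma weighted_sum_eq_mean (a : 'I_n -> R) :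
  comonotone (fun j => - a j) x -> n%:R^-1 * \sum_j a j = \sum_j a j * x j ->
  forall j k, x j != x k -> a j = a k.
Proof.
move=> mono eq_mean j k neq_x; apply: oppr_inj; apply: mean_eq_weighted_sum mono _ j k neq_x.
by rewrite sumrN mulrN eq_mean weighted_sumN.
Qed.

Lemma weights_const_eq_inv (j : 'I_n) : (forall k, x k = x j) -> x j = n%:R^-1.
Proof.
move=> x_const; apply: (mulfI n_neq0); rewrite mulfV // -[RHS]sum_x1.
by rewrite (eq_bigr (fun=> x j)) // sum_const_ord.
Qed.

Lemma mean_eq_weighted_sum_of_const (a : 'I_n -> R) :
  (forall j, x j = n%:R^-1) \/ (exists c, forall j, a j = c) ->
  n%:R^-1 * \sum_j a j = \sum_j a j * x j.
Proof.
case=> [x_unif | [c a_const]].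
  by rewrite mulr_sumr; apply: eq_bigr => j _; rewrite x_unif mulrC.
rewrite (eq_bigr (fun=> c)) // sum_const_ord mulKf //.
by rewrite (eq_bigr (fun j => c * x j)) => [|j _]; rewrite ?a_const // -mulr_sumr sum_x1 mulr1.
Qed.

End ProbabilityWeights.

Lemma const_or_rows_const (T : Type) (U : eqType) (m n : nat) (A : 'M[T]_(m, n))
    (x : 'I_n -> U) :
  (forall i j k, x j != x k -> A i j = A i k) ->
  (forall j k, x j = x k) \/ (forall i, exists c, forall j, A i j = c).
Proof.
move=> A_split; case: (boolP [exists j, exists k, x j != x k]); last first.
  move/existsPn=> x_const; left=> j k; apply/eqP.
  by move/existsPn: (x_const j) => /(_ k); rewrite negbK.
case/existsP=> j0 /existsP[k0 neq_x0]; right=> i; exists (A i j0) => j.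
have [eq_x|] := eqVneq (x j) (x j0); last exact: A_split.
by rewrite (A_split i j k0) ?eq_x // (A_split i j0 k0).
Qed.

Lemma eigenvector_rowE (R : comNzRingType) (n : nat) (A : 'M[R]_n) (x : 'cV[R]_n)
    (r : R) (i : 'I_n) :
  A *m x = r *: x -> \sum_j A i j * x j 0 = r * x i 0.
Proof. by move/(congr1 (fun M : 'cV_n => M i 0)); rewrite !mxE. Qed.

Theorem lemma2p2 (R : rcfType) (n : nat) (A : 'M[R]_n) (x : 'cV[R]_n) (rho : R) :
  (forall i j, 0 <= A i j) ->
  perron_eigenvector A rho x ->
  \sum_(i < n) x i 0 = 1 ->
  let H1 := forall i j k : 'I_n, x k 0 < x j 0 -> A i k <= A i j in
  let H2 := forall i j k : 'I_n, x k 0 < x j 0 -> A i k >= A i j in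
  (H1 -> forall i : 'I_n,
     (n%:R)^-1 * \sum_(j < n) A i j <= \sum_(j < n) A i j * x j 0 /\
     \sum_(j < n) A i j * x j 0 = rho * x i 0) /\
  (H2 -> forall i : 'I_n,
     (n%:R)^-1 * \sum_(j < n) A i j >= \sum_(j < n) A i j * x j 0 /\
     \sum_(j < n) A i j * x j 0 = rho * x i 0) /\
  (H1 \/ H2 ->
     ((forall i : 'I_n,
         (n%:R)^-1 * \sum_(j < n) A i j = \sum_(j < n) A i j * x j 0 /\
         \sum_(j < n) A i j * x j 0 = rho * x i 0)
      <->
      ((forall i : 'I_n, x i 0 = (n%:R)^-1) \/
       (forall i : 'I_n, exists c : R, forall j : 'I_n, A i j = c)))).
Proof.
move=> _ [_ [_ [_ Ax]]] sum_x1 H1 H2.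
pose xs j := x j 0.
have eig i := eigenvector_rowE i Ax.
have mono1 : H1 -> forall i, comonotone (A i) xs by move=> h i j k; apply: h.
have mono2 : H2 -> forall i, comonotone (fun j => - A i j) xs.
  by move=> h i j k /h; rewrite lerN2.
split; [|split].
- by move/mono1=> mono i; split; [apply: mean_le_weighted_sum | apply: eig].
- by move/mono2=> mono i; split; [apply: weighted_sum_le_mean | apply: eig].
move=> H12; split=> [eq_means | const_case].
  have A_split i j k : xs j != xs k -> A i j = A i k.
    have eq_mean := (eq_means i).1.
    by case: H12 => [/mono1|/mono2] mono;
      [apply: mean_eq_weighted_sum | apply: weighted_sum_eq_mean].
  have [x_const|] := const_or_rows_const A_split; last by right.
  by left=> i; apply: (weights_const_eq_inv (x := xs)) => // k; apply: x_const.
move=> i; split; last exact: eig.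
apply: mean_eq_weighted_sum_of_const => //.
by case: const_case => [x_unif|rows_const]; [left | right; apply: rows_const].
Qed.
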